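(* Let $a>0$ and $0\le r_0<a$, and consider, in polar coordinates $(r,\theta)$ about a pole $O$, the circle of radius $a$ whose centre $C$ has polar coordinates $(r_0,\theta_0)$, so that the ray from $O$ in direction $\theta$ meets the circle at distance $$r(\theta)=r_0\cos(\theta-\theta_0)+\sqrt{a^2-r_0^2\sin^2(\theta-\theta_0)} .$$ Let $\theta_1<\theta_2<\theta_1+\pi$ and set $\theta_3=\theta_1+\pi$, $\theta_4=\theta_2+\pi$, $\theta_5=\theta_1+2\pi$. The two lines through $O$ in the directions $\theta_1,\theta_2$ divide the disc into four sectors with areas $S_i=\frac12\int_{\theta_i}^{\theta_{i+1}} r(\theta)^2\,d\theta$, $1\le i\le 4$. Then $$S_1+S_3=a^2(\theta_2-\theta_1)+r_0^2\sin(\theta_2-\theta_1)\cos(\theta_1+\theta_2-2\theta_0),\qquad S_2+S_4=a^2(\pi-\theta_2+\theta_1)-r_0^2\sin(\theta_2-\theta_1)\cos(\theta_1+\theta_2-2\theta_0),$$ and $S_1+S_3=S_2+S_4$ if and only if $$\frac{r_0^2}{2}\Big[\sin 2(\theta_2-\theta_0)-\sin 2(\theta_1-\theta_0)\Big]+a^2\Big(\theta_2-\theta_1-\frac{\pi}{2}\Big)=0 .$$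
   Context: Polar coordinates are taken about the pole $O$; the point with polar coordinates $(r,\theta)$ is $O+r(\cos\theta,\sin\theta)$. The sector $S_i$ is the region $\{O+\rho(\cos\theta,\sin\theta):\ \theta_i\le\theta\le\theta_{i+1},\ 0\le\rho\le r(\theta)\}$. *)

From Stdlib Require Import Reals.
From Coquelicot Require Import Coquelicot.
Open Scope R_scope.

Definition rpolar (a r0 th0 th : R) : R :=
  r0 * cos (th - th0) + sqrt (a ^ 2 - r0 ^ 2 * (sin (th - th0)) ^ 2).

Definition sector_area (a r0 th0 ta tb : R) : R :=
  / 2 * RInt (fun th => (rpolar a r0 th0 th) ^ 2) ta tb.

(* The line through O in direction t meets the circle at the signed distances
   r(t) and -r(t + PI), the two roots of rho^2 - 2 r0 cos(t - th0) rho
   - (a^2 - r0^2) = 0.  Hence r(t)^2 + r(t + PI)^2 = 2 a^2 + 2 r0^2 cos 2(t - th0),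
   so the areas of two opposite sectors add up to the integral of an
   elementary function, which is computed in closed form. *)

From Stdlib Require Import Reals Lra Psatz.
From Coquelicot Require Import Coquelicot.
Open Scope R_scope.

Lemma sin_double_diff (c x y : R) :
  sin (2 * (y - c)) - sin (2 * (x - c)) = 2 * sin (y - x) * cos (x + y - 2 * c).
Proof.
  replace (2 * (y - c)) with ((x + y - 2 * c) + (y - x)) by ring.
  replace (2 * (x - c)) with ((x + y - 2 * c) - (y - x)) by ring.
  set (p := x + y - 2 * c); set (q := y - x).
  rewrite (sin_plus p q), (sin_minus p q); ring.
Qed.

Lemma RInt_shift {V : CompleteNormedModule R_AbsRing} (f : R -> V) (c u v : R) :
  ex_RInt f (u + c) (v + c) ->
  RInt f (u + c) (v + c) = RInt (fun t => f (t + c)) u v.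
Proof.
  intros Hf.
  replace (u + c) with (1 * u + c) in * by ring.
  replace (v + c) with (1 * v + c) in * by ring.
  rewrite <- (RInt_comp_lin f 1 c u v Hf).
  apply RInt_ext; intros t _.
  rewrite Rmult_1_l; apply (scal_one (K := R_Ring)).
Qed.

Lemma RInt_const_add_cos_double (A B c u v : R) :
  RInt (fun t => A + B * cos (2 * (t - c))) u v
  = A * (v - u) + B / 2 * (sin (2 * (v - c)) - sin (2 * (u - c))).
Proof.
  set (F := fun t => A * t + B / 2 * sin (2 * (t - c))).
  replace (A * (v - u) + B / 2 * (sin (2 * (v - c)) - sin (2 * (u - c))))
    with (F v - F u) by (unfold F; ring).
  apply is_RInt_unique, (is_RInt_derive F).
  - intros t _; unfold F; auto_derive; [easy | unfold Rminus; field].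
  - intros t _; apply (ex_derive_continuous (K := R_AbsRing) (V := R_NormedModule)).
    auto_derive; easy.
Qed.

Section OppositeSectors.

Variables a r0 th0 : R.
Hypothesis r0_sq_lt_a_sq : r0 ^ 2 < a ^ 2.

Lemma rpolar_radicand_pos (x : R) : 0 < a ^ 2 - r0 ^ 2 * sin x ^ 2.
Proof.
  destruct (SIN_bound x).
  assert (sin x ^ 2 <= 1) by nra.
  nra.
Qed.

Lemma continuous_rpolar_sq (th : R) :
  continuous (fun t => rpolar a r0 th0 t ^ 2) th.
Proof.
  apply (ex_derive_continuous (K := R_AbsRing) (V := R_NormedModule)).
  unfold rpolar; auto_derive.
  apply rpolar_radicand_pos.
Qed.

Lemma ex_RInt_rpolar_sq (u v : R) : ex_RInt (fun t => rpolar a r0 th0 t ^ 2) u v.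
Proof.
  apply (ex_RInt_continuous (V := R_CompleteNormedModule)); intros t _.
  apply continuous_rpolar_sq.
Qed.

Lemma rpolar_sq_add_antipodal (t : R) :
  rpolar a r0 th0 t ^ 2 + rpolar a r0 th0 (t + PI) ^ 2
  = 2 * a ^ 2 + 2 * r0 ^ 2 * cos (2 * (t - th0)).
Proof.
  unfold rpolar.
  replace (t + PI - th0) with ((t - th0) + PI) by ring.
  rewrite neg_cos, neg_sin, cos_2a.
  set (x := t - th0).
  replace ((- sin x) ^ 2) with (sin x ^ 2) by ring.
  pose proof (sqrt_sqrt _ (Rlt_le _ _ (rpolar_radicand_pos x))).
  pose proof (sin2_cos2 x).
  unfold Rsqr in *.
  set (s := sqrt _) in *.
  nra.
Qed.

Lemma sector_area_add_antipodal (u v : R) :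
  sector_area a r0 th0 u v + sector_area a r0 th0 (u + PI) (v + PI)
  = a ^ 2 * (v - u) + r0 ^ 2 * sin (v - u) * cos (u + v - 2 * th0).
Proof.
  unfold sector_area.
  set (f := fun t => rpolar a r0 th0 t ^ 2).
  rewrite (RInt_shift f) by apply ex_RInt_rpolar_sq.
  assert (Hshift : ex_RInt (fun t => f (t + PI)) u v).
  { apply (ex_RInt_continuous (V := R_CompleteNormedModule)); intros t _.
    apply (continuous_comp (fun t => t + PI) f).
    - apply (ex_derive_continuous (K := R_AbsRing) (V := R_NormedModule)).
      auto_derive; easy.
    - apply continuous_rpolar_sq. }
  rewrite <- Rmult_plus_distr_l.
  rewrite <- (RInt_plus (V := R_CompleteNormedModule))
    by (apply ex_RInt_rpolar_sq || exact Hshift).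
  rewrite (RInt_ext _ (fun t => 2 * a ^ 2 + 2 * r0 ^ 2 * cos (2 * (t - th0))))
    by (intros t _; apply rpolar_sq_add_antipodal).
  rewrite RInt_const_add_cos_double, sin_double_diff.
  field.
Qed.

End OppositeSectors.

Theorem mainTheorem3 (a r0 th0 th1 th2 : R) :
  0 < a -> 0 <= r0 -> r0 < a ->
  th1 < th2 -> th2 < th1 + PI ->
  let th3 := th1 + PI in
  let th4 := th2 + PI in
  let th5 := th1 + 2 * PI in
  let S1 := sector_area a r0 th0 th1 th2 in
  let S2 := sector_area a r0 th0 th2 th3 in
  let S3 := sector_area a r0 th0 th3 th4 in
  let S4 := sector_area a r0 th0 th4 th5 in
  S1 + S3 = a ^ 2 * (th2 - th1)
            + r0 ^ 2 * sin (th2 - th1) * cos (th1 + th2 - 2 * th0) /\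
  S2 + S4 = a ^ 2 * (PI - th2 + th1)
            - r0 ^ 2 * sin (th2 - th1) * cos (th1 + th2 - 2 * th0) /\
  (S1 + S3 = S2 + S4 <->
   r0 ^ 2 / 2 * (sin (2 * (th2 - th0)) - sin (2 * (th1 - th0)))
   + a ^ 2 * (th2 - th1 - PI / 2) = 0).
Proof.
  (* The ordering of th1 and th2 only makes the S_i genuine sectors; the
     identities hold for all directions. *)
  intros Ha Hr0 Hr0a _ _ th3 th4 th5 S1 S2 S3 S4.
  assert (Hr : r0 ^ 2 < a ^ 2) by nra.
  assert (S13 : S1 + S3 = a ^ 2 * (th2 - th1)
                          + r0 ^ 2 * sin (th2 - th1) * cos (th1 + th2 - 2 * th0))
    by (apply sector_area_add_antipodal; exact Hr).
  assert (S24 : S2 + S4 = a ^ 2 * (PI - th2 + th1)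
                          - r0 ^ 2 * sin (th2 - th1) * cos (th1 + th2 - 2 * th0)).
  { unfold S2, S4, th5.
    replace (th1 + 2 * PI) with (th3 + PI) by (unfold th3; ring).
    rewrite sector_area_add_antipodal by exact Hr.
    replace (th3 - th2) with ((th1 - th2) + PI) by (unfold th3; ring).
    replace (th2 + th3 - 2 * th0) with ((th1 + th2 - 2 * th0) + PI) by (unfold th3; ring).
    rewrite neg_sin, neg_cos, <- (Ropp_minus_distr th2 th1), sin_neg.
    unfold th3; ring. }
  split; [exact S13 | split; [exact S24 |]].
  rewrite S13, S24, sin_double_diff.
  split; intros; lra.
Qed.
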